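(* Let $\mathcal{A}$ be an alternative $W^{*}$-factor, $\mathcal{B}$ an alternative complex $\ast$-algebra, and $\Phi:\mathcal{A}\to\mathcal{B}$ a bijection preserving product $ab+ba^{*}$ (resp. $ab-ba^{*}$). Let $p_{1}\in\mathcal{A}$ be a projection with $p_{1}\neq 1_{\mathcal{A}}$, $p_{2}=1_{\mathcal{A}}-p_{1}$, and $\mathcal{A}_{ij}=p_{i}\mathcal{A}p_{j}$. Then $\Phi(a_{11}+b_{12}+c_{21}+d_{22})=\Phi(a_{11})+\Phi(b_{12})+\Phi(c_{21})+\Phi(d_{22})$ for all $a_{11}\in\mathcal{A}_{11}$, $b_{12}\in\mathcal{A}_{12}$, $c_{21}\in\mathcal{A}_{21}$, $d_{22}\in\mathcal{A}_{22}$.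
   Context: An alternative $W^{*}$-factor is a prime alternative $C^{*}$-algebra (complete normed alternative complex $\ast$-algebra with $\|a^{*}a\|=\|a\|^{2}$) that is a dual Banach space; it is unital. A projection is a nonzero self-adjoint idempotent. $\mathcal{A}_{ij}$ are the Peirce components with respect to $p_{1}$. $\Phi$ preserves product $ab+ba^{*}$ (resp. $ab-ba^{*}$) if $\Phi(ab+ba^{*})=\Phi(a)\Phi(b)+\Phi(b)\Phi(a)^{*}$ (resp. $\Phi(ab-ba^{*})=\Phi(a)\Phi(b)-\Phi(b)\Phi(a)^{*}$) for all $a,b\in\mathcal{A}$. *)

From mathcomp Require Import all_boot all_order all_algebra.
From mathcomp Require Import complex.
From mathcomp Require Import reals.
Set Implicit Arguments. Unset Strict Implicit. Unset Printing Implicit Defensive.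
Import Order.TTheory GRing.Theory Num.Theory.
Local Open Scope ring_scope.

Section AltDefs.
Variable R : realType.
Local Notation C := (R[i]).
Local Notation normC := (@Normc.normc R).

Definition normed_space (X : lmodType C) (n : X -> R) : Prop :=
  [/\ forall x, 0 <= n x,
      forall x, n x = 0 -> x = 0,
      forall x y, n (x + y) <= n x + n y &
      forall (c : C) x, n (c *: x) = normC c * n x].

Definition complete_norm (X : lmodType C) (n : X -> R) : Prop :=
  forall u : nat -> X,
    (forall e : R, 0 < e -> exists N : nat, forall m k : nat,
        (N <= m)%N -> (N <= k)%N -> n (u m - u k) < e) ->
    exists l : X, forall e : R, 0 < e -> exists N : nat, forall m : nat,
        (N <= m)%N -> n (u m - l) < e.

Definition banach_space (X : lmodType C) (n : X -> R) : Prop :=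
  normed_space n /\ complete_norm n.

Definition alt_star_alg (A : lmodType C) (mul : A -> A -> A) (star : A -> A)
  : Prop :=
  [/\ forall (c : C) x y z, mul (c *: x + y) z = c *: mul x z + mul y z,
      forall (c : C) x y z, mul z (c *: x + y) = c *: mul z x + mul z y,
      forall x y, mul (mul x x) y = mul x (mul x y) &
      forall x y, mul (mul y x) x = mul y (mul x x)] /\
  [/\ forall (c : C) x y, star (c *: x + y) = (c^*)%C *: star x + star y,
      forall x, star (star x) = x &
      forall x y, star (mul x y) = mul (star y) (star x)].

Definition alt_Cstar_alg (A : lmodType C) (mul : A -> A -> A) (star : A -> A)
  (n : A -> R) : Prop :=
  [/\ alt_star_alg mul star,
      banach_space n,
      forall x y, n (mul x y) <= n x * n y &
      forall x, n (mul (star x) x) = n x ^+ 2].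

Definition is_ideal (A : lmodType C) (mul : A -> A -> A) (I : A -> Prop) : Prop :=
  [/\ I 0,
      forall (c : C) x y, I x -> I y -> I (c *: x + y) &
      forall x y, I x -> I (mul x y) /\ I (mul y x)].

Definition prime_alg (A : lmodType C) (mul : A -> A -> A) : Prop :=
  forall I J : A -> Prop, is_ideal mul I -> is_ideal mul J ->
    (forall x y, I x -> J y -> mul x y = 0) ->
    (forall x, I x -> x = 0) \/ (forall y, J y -> y = 0).

(* (A, n) is (isometrically isomorphic to) the dual of some Banach space X *)
Definition dual_banach (A : lmodType C) (n : A -> R) : Prop :=
  exists (X : lmodType C) (nX : X -> R) (T : A -> X -> C),
    banach_space nX /\
    [/\
        forall a (c : C) x y, T a (c *: x + y) = c * T a x + T a y,
        forall a, exists M : R, forall x, normC (T a x) <= M * nX x,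
        forall (c : C) a b x, T (c *: a + b) x = c * T a x + T b x,
        forall f : X -> C,
          (forall (c : C) x y, f (c *: x + y) = c * f x + f y) ->
          (exists M : R, forall x, normC (f x) <= M * nX x) ->
          exists a, forall x, T a x = f x &
        (* T is isometric for the operator norm: n a = sup_{nX x <= 1} |T a x| *)
        forall a, (forall x, normC (T a x) <= n a * nX x) /\
          (forall e : R, 0 < e -> exists x, nX x <= 1 /\ n a - e < normC (T a x))].

Definition alt_Wstar_factor (A : lmodType C) (mul : A -> A -> A) (star : A -> A)
  (n : A -> R) : Prop :=
  [/\ alt_Cstar_alg mul star n, prime_alg mul & dual_banach n].

Definition is_unit_of (A : lmodType C) (mul : A -> A -> A) (one : A) : Prop :=
  forall x, mul one x = x /\ mul x one = x.

Definition projection (A : lmodType C) (mul : A -> A -> A) (star : A -> A) (p : A)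
  : Prop := [/\ p <> 0, star p = p & mul p p = p].

Definition peirce (A : lmodType C) (mul : A -> A -> A) (p q : A) (x : A) : Prop :=
  exists a, x = mul (mul p a) q.

Definition preserves_plus (A B : lmodType C) (mulA : A -> A -> A) (starA : A -> A)
  (mulB : B -> B -> B) (starB : B -> B) (Phi : A -> B) : Prop :=
  forall a b, Phi (mulA a b + mulA b (starA a)) =
              mulB (Phi a) (Phi b) + mulB (Phi b) (starB (Phi a)).

Definition preserves_minus (A B : lmodType C) (mulA : A -> A -> A) (starA : A -> A)
  (mulB : B -> B -> B) (starB : B -> B) (Phi : A -> B) : Prop :=
  forall a b, Phi (mulA a b - mulA b (starA a)) =
              mulB (Phi a) (Phi b) - mulB (Phi b) (starB (Phi a)).

End AltDefs.

From mathcomp Require Import all_boot all_order all_algebra.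
From mathcomp Require Import complex.
From mathcomp Require Import reals.
Import GRing.Theory Num.Theory.
Set Implicit Arguments. Unset Strict Implicit. Unset Printing Implicit Defensive.
Local Open Scope ring_scope.

(* Both products ab + ba^* and ab - ba^* are instances of the twisted product
   x.y = xy + sg yx^* with sg = 1, resp. sg = -1.  For a scalar z with
   sg conj(z) = z (z = 1, resp. z = i) one has (z x).y = z J(x, y), where
   J(x, y) = xy + yx^* is a Jordan-type product.  Hence a relation
   Phi t = Phi s_1 + ... + Phi s_n is transported, through the preservation
   property and additivity of the product of B, to the same relation between
   the elements z J(x, t) and z J(x, s_k), for every multiplier x.

   In A we only use bilinearity, the alternative laws (hence flexibility),
   the involution, the unit, and a self-adjoint idempotent p with complement
   q = 1 - p.  Membership in a Peirce space A_ij is read off from p x and x p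
   (peirce_in). *)

Section ComplexScalars.
Variable R : realType.

Lemma conjcN1 : ((-1 : R[i])^*)%C = -1.
Proof. by apply/eqP; rewrite eq_complex /= !oppr0 !eqxx. Qed.

Lemma conjci : (('i : R[i])^*)%C = - 'i.
Proof. by apply/eqP; rewrite eq_complex /= oppr0 !eqxx. Qed.

Lemma i_neq0 : ('i : R[i]) != 0.
Proof. by rewrite eq_complex /= oner_eq0 andbF. Qed.

Lemma double_inj (V : lmodType R[i]) (x y : V) : x + x = y + y -> x = y.
Proof.
have two_neq0 : (2%:R : R[i]) != 0 by rewrite pnatr_eq0.
by move=> h; apply: (scalerI two_neq0); rewrite !scaler_nat !mulr2n.
Qed.

Lemma double_eq0 (V : lmodType R[i]) (x : V) : x + x = 0 -> x = 0.
Proof. by move=> h; apply: double_inj; rewrite h addr0. Qed.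

End ComplexScalars.

Section Bilinear.
Variables (R : realType) (V : lmodType R[i]) (m : V -> V -> V).
Hypothesis mDl : forall (c : R[i]) x y w, m (c *: x + y) w = c *: m x w + m y w.
Hypothesis mDr : forall (c : R[i]) x y w, m w (c *: x + y) = c *: m w x + m w y.

Lemma bmulDl x y w : m (x + y) w = m x w + m y w.
Proof. by have := mDl 1 x y w; rewrite !scale1r. Qed.

Lemma bmulDr x y w : m w (x + y) = m w x + m w y.
Proof. by have := mDr 1 x y w; rewrite !scale1r. Qed.

Lemma bmul0l w : m 0 w = 0.
Proof. by apply: (addrI (m 0 w)); rewrite -bmulDl !addr0. Qed.

Lemma bmul0r w : m w 0 = 0.
Proof. by apply: (addrI (m w 0)); rewrite -bmulDr !addr0. Qed.

Lemma bmulZl c x w : m (c *: x) w = c *: m x w.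
Proof. by have := mDl c x 0 w; rewrite !addr0 bmul0l addr0. Qed.

Lemma bmulZr c x w : m w (c *: x) = c *: m w x.
Proof. by have := mDr c x 0 w; rewrite !addr0 bmul0r addr0. Qed.

Lemma bmulNl x w : m (- x) w = - m x w.
Proof. by rewrite -scaleN1r bmulZl scaleN1r. Qed.

Lemma bmulNr x w : m w (- x) = - m w x.
Proof. by rewrite -scaleN1r bmulZr scaleN1r. Qed.

Lemma bmulBl x y w : m (x - y) w = m x w - m y w.
Proof. by rewrite bmulDl bmulNl. Qed.

Lemma bmulBr x y w : m w (x - y) = m w x - m w y.
Proof. by rewrite bmulDr bmulNr. Qed.

End Bilinear.

Section ConjLinear.
Variables (R : realType) (V : lmodType R[i]) (s : V -> V).
Hypothesis sD : forall (c : R[i]) x y, s (c *: x + y) = (c^*)%C *: s x + s y.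

Lemma cstarD x y : s (x + y) = s x + s y.
Proof. by have := sD 1 x y; rewrite !scale1r conjc1 scale1r. Qed.

Lemma cstar0 : s 0 = 0.
Proof. by apply: (addrI (s 0)); rewrite -cstarD !addr0. Qed.

Lemma cstarZ c x : s (c *: x) = (c^*)%C *: s x.
Proof. by have := sD c x 0; rewrite !addr0 cstar0 addr0. Qed.

Lemma cstarB x y : s (x - y) = s x - s y.
Proof. by rewrite cstarD -scaleN1r cstarZ conjcN1 scaleN1r. Qed.

End ConjLinear.

(* The twisted product x.y = xy + sg yx^*: for sg = 1 and sg = -1 these are the
   two products preserved by Phi.  It is additive in each argument. *)
Section TwistedProduct.
Variables (R : realType) (V : lmodType R[i]) (m : V -> V -> V) (s : V -> V).
Variable sg : R[i].

Definition twprod x y := m x y + sg *: m y (s x).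

Hypothesis mDl : forall (c : R[i]) x y w, m (c *: x + y) w = c *: m x w + m y w.
Hypothesis mDr : forall (c : R[i]) x y w, m w (c *: x + y) = c *: m w x + m w y.
Hypothesis sD : forall (c : R[i]) x y, s (c *: x + y) = (c^*)%C *: s x + s y.

Lemma twprodDl x x' y : twprod (x + x') y = twprod x y + twprod x' y.
Proof.
by rewrite /twprod (bmulDl mDl) (cstarD sD) (bmulDr mDr) scalerDr addrACA.
Qed.

Lemma twprodDr x y y' : twprod x (y + y') = twprod x y + twprod x y'.
Proof.
by rewrite /twprod (bmulDr mDr) (bmulDl mDl) scalerDr addrACA.
Qed.

Lemma twprod0l y : twprod 0 y = 0.
Proof. by rewrite /twprod (bmul0l mDl) (cstar0 sD) (bmul0r mDr) scaler0 addr0. Qed.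

Lemma twprod0r x : twprod x 0 = 0.
Proof. by rewrite /twprod (bmul0r mDr) (bmul0l mDl) scaler0 addr0. Qed.

End TwistedProduct.

Section Peirce.
Variables (R : realType) (A : lmodType R[i]).
Variables (mul : A -> A -> A) (star : A -> A) (one : A).
Hypothesis mulDl : forall (c : R[i]) x y z, mul (c *: x + y) z = c *: mul x z + mul y z.
Hypothesis mulDr : forall (c : R[i]) x y z, mul z (c *: x + y) = c *: mul z x + mul z y.
Hypothesis alt_l : forall x y, mul (mul x x) y = mul x (mul x y).
Hypothesis alt_r : forall x y, mul (mul y x) x = mul y (mul x x).
Hypothesis starD : forall (c : R[i]) x y, star (c *: x + y) = (c^*)%C *: star x + star y.
Hypothesis starK : forall x, star (star x) = x.
Hypothesis starM : forall x y, star (mul x y) = mul (star y) (star x).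
Hypothesis unitA : is_unit_of mul one.

Local Notation mulD1l := (bmulDl mulDl).
Local Notation mulD1r := (bmulDr mulDr).
Local Notation mul0l := (bmul0l mulDl).
Local Notation mulZl := (bmulZl mulDl).
Local Notation mulZr := (bmulZr mulDr).
Local Notation mulBl := (bmulBl mulDl).
Local Notation mulBr := (bmulBr mulDr).

Lemma mul_onel x : mul one x = x. Proof. by case: (unitA x). Qed.
Lemma mul_oner x : mul x one = x. Proof. by case: (unitA x). Qed.

Lemma flexible x y : mul (mul x y) x = mul x (mul y x).
Proof.
have h := alt_r (y + x) x.
rewrite !mulD1r !mulD1l !mulD1r alt_r (alt_r x x) alt_l in h.
by move/addrI/addIr: h.
Qed.

Lemma star1 : star one = one.
Proof. by have := congr1 star (mul_onel (star one)); rewrite starM !starK mul_onel. Qed.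

Definition jstar x y := mul x y + mul y (star x).

Lemma jstarB x x' y : jstar (x - x') y = jstar x y - jstar x' y.
Proof. by rewrite /jstar mulBl (cstarB starD) mulBr opprD addrACA. Qed.

Lemma twprod_scale (sg z : R[i]) x y : sg * (z^*)%C = z ->
  twprod mul star sg (z *: x) y = z *: jstar x y.
Proof.
by move=> hz; rewrite /twprod /jstar mulZl (cstarZ starD) mulZr scalerA hz scalerDr.
Qed.

Variable p : A.
Hypothesis pp : mul p p = p.
Hypothesis sp : star p = p.

Let q := one - p.

Lemma mulppL y : mul p (mul p y) = mul p y.
Proof. by rewrite -alt_l pp. Qed.

Lemma mulppR y : mul (mul y p) p = mul y p.
Proof. by rewrite alt_r pp. Qed.

Lemma flexp y : mul p (mul y p) = mul (mul p y) p.
Proof. by rewrite flexible. Qed.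

Lemma mulqL y : mul q y = y - mul p y.
Proof. by rewrite mulBl mul_onel. Qed.

Lemma mulqR y : mul y q = y - mul y p.
Proof. by rewrite mulBr mul_oner. Qed.

Lemma mulpqL y : mul p (mul q y) = 0.
Proof. by rewrite mulqL mulBr mulppL subrr. Qed.

Lemma mulqpL y : mul q (mul p y) = 0.
Proof. by rewrite mulqL mulppL subrr. Qed.

Lemma mulqqL y : mul q (mul q y) = mul q y.
Proof. by rewrite [LHS]mulqL mulpqL subr0. Qed.

Lemma mulqpR y : mul (mul y q) p = 0.
Proof. by rewrite mulqR mulBl mulppR subrr. Qed.

Lemma flexpq y : mul p (mul y q) = mul (mul p y) q.
Proof. by rewrite !mulqR mulBr flexp. Qed.

Lemma star_mulp y : mul p (star y) = star (mul y p).
Proof. by rewrite starM sp. Qed.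

Lemma star_q : star q = q.
Proof. by rewrite /q (cstarB starD) star1 sp. Qed.

Lemma jstar_p y : jstar p y = mul p y + mul y p.
Proof. by rewrite /jstar sp. Qed.

Lemma jstar_q y : jstar q y = y + y - (mul p y + mul y p).
Proof. by rewrite /jstar star_q mulqL mulqR opprD addrACA. Qed.

Lemma jstar_pq y : jstar (p - q) y =
  (mul p y + mul y p - y) + (mul p y + mul y p - y).
Proof. by rewrite jstarB jstar_p jstar_q opprB addrA opprD addrACA. Qed.

Lemma jstar_ip y : jstar ('i *: p) y = 'i *: (mul p y - mul y p).
Proof. by rewrite /jstar (cstarZ starD) sp mulZl mulZr conjci scaleNr scalerBr. Qed.

(* x lies in A_ij (row i, column j; true = 1, false = 2), expressed through
   one-sided multiplication by p. *)
Definition peirce_in (i j : bool) x :=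
  mul p x = (if i then x else 0) /\ mul x p = (if j then x else 0).

Lemma peirce_in_of (i j : bool) x :
  peirce mul (if i then p else q) (if j then p else q) x -> peirce_in i j x.
Proof.
case=> y ->; case: i; case: j; split;
  by rewrite ?flexp ?flexpq ?mulppL ?mulppR ?mulpqL ?mulqpR ?mul0l.
Qed.

Lemma peirce_inZ i j c x : peirce_in i j x -> peirce_in i j (c *: x).
Proof.
case=> px xp; rewrite /peirce_in mulZr mulZl px xp.
by case: i j {px xp} => [] []; rewrite ?scaler0.
Qed.

Lemma peirce_inN i j x : peirce_in i j x -> peirce_in i j (- x).
Proof. by rewrite -scaleN1r; apply: peirce_inZ. Qed.

Lemma peirce_inD i j x y :
  peirce_in i j x -> peirce_in i j y -> peirce_in i j (x + y).
Proof.
case=> px xp [py yp]; rewrite /peirce_in mulD1r mulD1l px xp py yp.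
by case: i j {px xp py yp} => [] []; rewrite ?addr0.
Qed.

Lemma jstar_pq_peirce i j y : peirce_in i j y ->
  jstar (p - q) y = if i == j then (if i then y + y else - y + - y) else 0.
Proof.
case: i j => [] [] [py yp]; rewrite jstar_pq py yp /=;
  by rewrite ?addrK ?addr0 ?add0r ?subrr ?sub0r ?addr0.
Qed.

Lemma jstar_ip_peirce i j y : peirce_in i j y ->
  jstar ('i *: p) y = if i == j then 0 else if i then 'i *: y else - ('i *: y).
Proof.
case: i j => [] [] [py yp]; rewrite jstar_ip py yp /=;
  by rewrite ?subrr ?subr0 ?sub0r ?scaler0 ?scalerN.
Qed.

Lemma peirce_recover a b c d t :
  peirce_in true true a -> peirce_in true false b ->
  peirce_in false true c -> peirce_in false false d ->
  mul p t + mul t p - t = a - d -> mul p t - mul t p = b - c ->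
  t = a + b + c + d.
Proof.
rewrite /peirce_in /= => -[pa ap] [pb bp] [pc cp] [pd dp] Ediag Eoff.
have ptp : mul (mul p t) p = a.
  move/(congr1 (mul p)): Ediag.
  by rewrite !mulBr mulD1r mulppL flexp pa pd subr0 addrC addKr.
have pt : mul p t = a + b.
  move/(congr1 (mul p)): Eoff; rewrite !mulBr mulppL flexp ptp pb pc subr0.
  by move/eqP; rewrite subr_eq addrC => /eqP.
have tp : mul t p = a + c.
  move/(congr1 (mul^~ p)): Eoff; rewrite !mulBl mulppR ptp bp cp sub0r.
  by rewrite -opprB => /oppr_inj/eqP; rewrite subr_eq addrC => /eqP.
have -> : t = mul p t + mul t p - (a - d) by rewrite -Ediag opprB addrC subrK.
by rewrite pt tp opprB (addrC d) !addrA (addrAC _ c) addrK.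
Qed.

Section Transfer.
Variables (B : lmodType R[i]) (mulB : B -> B -> B) (starB : B -> B).
Hypothesis mulBDl : forall (c : R[i]) x y z,
  mulB (c *: x + y) z = c *: mulB x z + mulB y z.
Hypothesis mulBDr : forall (c : R[i]) x y z,
  mulB z (c *: x + y) = c *: mulB z x + mulB z y.
Hypothesis starBD : forall (c : R[i]) x y,
  starB (c *: x + y) = (c^*)%C *: starB x + starB y.
Variables (sg z : R[i]).
Hypothesis z_neq0 : z != 0.
Hypothesis sg_z : sg * (z^*)%C = z.
Variable Phi : A -> B.
Hypothesis Phi_inj : injective Phi.
Hypothesis Phi_surj : forall b, exists a, Phi a = b.
Hypothesis Phi_tw : forall x y,
  Phi (twprod mul star sg x y) = twprod mulB starB sg (Phi x) (Phi y).

Local Notation opA := (twprod mul star sg).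

(* Phi 0 = 0: 0 is the twisted product of 0 with a preimage of 0. *)
Lemma Phi0 : Phi 0 = 0.
Proof.
have [b Phib] := Phi_surj 0.
have := Phi_tw 0 b.
by rewrite (twprod0l _ mulDl mulDr starD) Phib (twprod0r _ _ mulBDl mulBDr).
Qed.

Lemma transfer_l y t s1 s2 : Phi t = Phi s1 + Phi s2 ->
  Phi (opA t y) = Phi (opA s1 y) + Phi (opA s2 y).
Proof. by move=> h; rewrite !Phi_tw h (twprodDl _ mulBDl mulBDr starBD). Qed.

Lemma jstar_transfer2 x t s1 s2 : Phi t = Phi s1 + Phi s2 ->
  Phi (z *: jstar x t) = Phi (z *: jstar x s1) + Phi (z *: jstar x s2).
Proof.
move=> h; rewrite -!(twprod_scale _ _ sg_z) !Phi_tw h.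
by rewrite (twprodDr _ _ mulBDl mulBDr).
Qed.

Lemma jstar_transfer4 x t s1 s2 s3 s4 :
  Phi t = Phi s1 + Phi s2 + Phi s3 + Phi s4 ->
  Phi (z *: jstar x t) = Phi (z *: jstar x s1) + Phi (z *: jstar x s2)
                       + Phi (z *: jstar x s3) + Phi (z *: jstar x s4).
Proof.
move=> h; rewrite -!(twprod_scale _ _ sg_z) !Phi_tw h.
by rewrite !(twprodDr _ _ mulBDl mulBDr).
Qed.

(* Additivity on A_11 + A_22, using the multipliers p and q. *)
Lemma sum_diag a d t : peirce_in true true a -> peirce_in false false d ->
  Phi t = Phi a + Phi d -> t = a + d.
Proof.
rewrite /peirce_in /= => -[pa ap] [pd dp] ht.
have Ep : mul p t + mul t p = a + a.
  move: (jstar_transfer2 p ht).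
  rewrite !jstar_p pa ap pd dp addr0 scaler0 Phi0 addr0.
  by move/Phi_inj/(scalerI z_neq0).
have Eq : t + t - (mul p t + mul t p) = d + d.
  move: (jstar_transfer2 q ht); rewrite !jstar_q pa ap pd dp addr0 subr0 subrr.
  by rewrite scaler0 Phi0 add0r => /Phi_inj/(scalerI z_neq0).
apply: double_inj; move/eqP: Eq; rewrite Ep subr_eq => /eqP ->.
by rewrite addrACA (addrC d).
Qed.

(* Additivity on A_12 + A_21: p - q kills both summands, forcing
   p t + t p = t, and the twisted products with p and q isolate the two
   off-diagonal parts of t. *)
Lemma sum_offdiag b c t : peirce_in true false b -> peirce_in false true c ->
  Phi t = Phi b + Phi c -> t = b + c.
Proof.
move=> Hb Hc ht; have [pb bp] := Hb; have [pc cp] := Hc.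
rewrite /= in pb bp pc cp.
have E0 : mul p t + mul t p = t.
  move: (jstar_transfer2 (p - q) ht).
  rewrite (jstar_pq_peirce Hb) (jstar_pq_peirce Hc) /= scaler0 Phi0 addr0.
  rewrite -Phi0 -(scaler0 _ z) => /Phi_inj/(scalerI z_neq0).
  by rewrite jstar_pq => /double_eq0/subr0_eq.
have opbp : opA b p = 0.
  by rewrite /twprod bp star_mulp bp (cstar0 starD) scaler0 addr0.
have opcq : opA c q = 0.
  by rewrite /twprod mulqR cp subrr mulqL star_mulp cp subrr scaler0 addr0.
have qtp : mul q (mul t p) = c.
  move: (transfer_l p ht); rewrite opbp Phi0 add0r => /Phi_inj/(congr1 (mul q)).
  rewrite /twprod ![mul q (_ + _)]mulD1r !mulZr !mulqpL scaler0 !addr0.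
  by rewrite cp [mul q c]mulqL pc subr0.
have ptq : mul p (mul t q) = b.
  move: (transfer_l q ht); rewrite opcq Phi0 addr0 => /Phi_inj/(congr1 (mul p)).
  rewrite /twprod ![mul p (_ + _)]mulD1r !mulZr !mulpqL scaler0 !addr0.
  by rewrite [mul b q]mulqR bp subr0 pb.
have tq : mul t q = mul p t by rewrite mulqR -{1}E0 addrK.
have qt : mul q t = mul t p by rewrite mulqL -{1}E0 addrC addKr.
rewrite -E0 -qt; congr (_ + _).
  by rewrite -ptq tq mulppL.
by rewrite -qtp -qt mulqqL.
Qed.

(* Additivity on the full Peirce decomposition: the multipliers p - q and i p
   reduce to the two previous cases and yield the data of peirce_recover. *)
Lemma sum_peirce a b c d t :
  peirce_in true true a -> peirce_in true false b ->
  peirce_in false true c -> peirce_in false false d ->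
  Phi t = Phi a + Phi b + Phi c + Phi d -> t = a + b + c + d.
Proof.
move=> Ha Hb Hc Hd ht; apply: (peirce_recover Ha Hb Hc Hd).
  have Ediag : z *: jstar (p - q) t = z *: (a + a) + z *: (- d + - d).
    apply: sum_diag; first by apply: peirce_inZ; apply: peirce_inD.
      by apply: peirce_inZ; apply: peirce_inD; apply: peirce_inN.
    move: (jstar_transfer4 (p - q) ht).
    rewrite (jstar_pq_peirce Ha) (jstar_pq_peirce Hb) (jstar_pq_peirce Hc).
    by rewrite (jstar_pq_peirce Hd) /= scaler0 Phi0 !addr0.
  move: Ediag; rewrite jstar_pq -scalerDr => /(scalerI z_neq0) Ediag.
  by apply: double_inj; rewrite Ediag addrACA.
have Eoff : z *: jstar ('i *: p) t = z *: ('i *: b) + z *: - ('i *: c).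
  apply: sum_offdiag; first by do 2!apply: peirce_inZ.
    by apply: peirce_inZ; apply: peirce_inN; apply: peirce_inZ.
  move: (jstar_transfer4 ('i *: p) ht).
  rewrite (jstar_ip_peirce Ha) (jstar_ip_peirce Hb) (jstar_ip_peirce Hc).
  by rewrite (jstar_ip_peirce Hd) /= scaler0 Phi0 add0r addr0.
apply: (scalerI (i_neq0 R)); apply: (scalerI z_neq0).
by rewrite -jstar_ip Eoff scalerBr scalerDr.
Qed.

(* Additivity on the Peirce spaces given as p A p, p A q, q A p, q A q: a
   preimage t of the right-hand side exists by surjectivity. *)
Lemma peirce_additive a b c d :
  peirce mul p p a -> peirce mul p q b -> peirce mul q p c -> peirce mul q q d ->
  Phi (a + b + c + d) = Phi a + Phi b + Phi c + Phi d.
Proof.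
move=> /(@peirce_in_of true true) Ha /(@peirce_in_of true false) Hb.
move=> /(@peirce_in_of false true) Hc /(@peirce_in_of false false) Hd.
have [t ht] := Phi_surj (Phi a + Phi b + Phi c + Phi d).
by rewrite -ht (sum_peirce Ha Hb Hc Hd ht).
Qed.

End Transfer.

End Peirce.

(* Both preservation hypotheses are instances of the twisted product, with
   (sg, z) = (1, 1) for ab + ba^* and (sg, z) = (-1, i) for ab - ba^*. *)
Lemma preserves_twisted (R : realType) (A B : lmodType R[i])
    (mulA : A -> A -> A) (starA : A -> A) (mulB : B -> B -> B) (starB : B -> B)
    (Phi : A -> B) :
  preserves_plus mulA starA mulB starB Phi \/
  preserves_minus mulA starA mulB starB Phi ->
  exists sg z : R[i], [/\ z != 0, sg * (z^*)%C = z &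
    forall x y, Phi (twprod mulA starA sg x y) =
                twprod mulB starB sg (Phi x) (Phi y)].
Proof.
case=> pres; [exists 1, 1 | exists (-1), 'i]; split.
- exact: oner_neq0.
- by rewrite conjc1 mulr1.
- by move=> x y; rewrite /twprod !scale1r pres.
- exact: i_neq0.
- by rewrite conjci mulN1r opprK.
- by move=> x y; rewrite /twprod !scaleN1r pres.
Qed.

Theorem claim2p4 (R : realType)
  (A : lmodType R[i]) (mulA : A -> A -> A) (starA : A -> A) (normA : A -> R)
  (oneA : A)
  (B : lmodType R[i]) (mulB : B -> B -> B) (starB : B -> B)
  (Phi : A -> B) (p1 : A) :
  alt_Wstar_factor mulA starA normA ->
  is_unit_of mulA oneA ->
  alt_star_alg mulB starB ->
  bijective Phi ->
  (preserves_plus mulA starA mulB starB Phi \/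
   preserves_minus mulA starA mulB starB Phi) ->
  projection mulA starA p1 ->
  p1 <> oneA ->
  let p2 := oneA - p1 in
  forall a11 b12 c21 d22 : A,
    peirce mulA p1 p1 a11 -> peirce mulA p1 p2 b12 ->
    peirce mulA p2 p1 c21 -> peirce mulA p2 p2 d22 ->
    Phi (a11 + b12 + c21 + d22) = Phi a11 + Phi b12 + Phi c21 + Phi d22.
Proof.
move=> [[[[mDl mDr alt_l alt_r] [sD sK sM]] _ _ _] _ _] unitA.
move=> [[mBDl mBDr _ _] [sBD _ _]] [Psi PhiK PsiK].
move=> /preserves_twisted [sg [z [z_neq0 sg_z Phi_tw]]] [_ sp pp] _ p2.
have Phi_surj : forall y, exists x, Phi x = y by move=> y; exists (Psi y).
exact: (peirce_additive mDl mDr alt_l alt_r sD sK sM unitA pp sp mBDl mBDr sBD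
          z_neq0 sg_z (can_inj PhiK) Phi_surj Phi_tw).
Qed.
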